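(* Let $f,g\in C[0,1]$ and let $\mathcal{R}$ be the ring of functions of the form $P(f,g)$, $x\mapsto p(f(x),g(x))$, where $p$ ranges over polynomials in two variables with real coefficients. Then for every $P(f,g)\in\mathcal{R}$, $$\overline{\dim}_B G(P(f,g))\le \max\{\overline{\dim}_B G(f),\ \overline{\dim}_B G(g)\}.$$
   Context: $C[0,1]$ is the space of real-valued continuous functions on $[0,1]$; $G(h)=\{(x,h(x)):x\in[0,1]\}\subset\mathbb{R}^2$ is the graph of $h$. For a nonempty bounded set $F$, $N_\delta(F)$ is the smallest number of sets of diameter at most $\delta$ covering $F$, and $\overline{\dim}_B F=\limsup_{\delta\to0}\frac{\log N_\delta(F)}{-\log\delta}$. *)

From HB Require Import structures.
From mathcomp Require Import all_boot all_order all_algebra.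
From mathcomp Require Import all_classical all_reals all_analysis.
Set Implicit Arguments. Unset Strict Implicit. Unset Printing Implicit Defensive.
Import Order.TTheory GRing.Theory Num.Theory numFieldNormedType.Exports.
Local Open Scope classical_set_scope.
Local Open Scope ring_scope.

Section Defs.
Variable R : realType.

Definition dist2 (p q : R * R) : R :=
  Num.sqrt ((p.1 - q.1) ^+ 2 + (p.2 - q.2) ^+ 2).

Definition graph (h : R -> R) : set (R * R) :=
  [set pq | exists x, (0 <= x <= 1) /\ pq = (x, h x)].

Definition covers (F : set (R * R)) (delta : R) (n : nat) : Prop :=
  exists U : 'I_n -> set (R * R),
    (forall i p q, U i p -> U i q -> dist2 p q <= delta) /\
    F `<=` \bigcup_i U i.

(* N_delta(F): the smallest number of such sets (as a real; meaningful for
   nonempty bounded F, where the defining set is nonempty) *)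
Definition Ndelta (F : set (R * R)) (delta : R) : R :=
  inf [set (n%:R : R) | n in [set n | covers F delta n]].

(* upper box dimension: limsup_{delta -> 0+} log N_delta(F) / (- log delta),
   written literally as inf_{eps>0} sup_{0<delta<eps} *)
Definition ubox_dim (F : set (R * R)) : \bar R :=
  ereal_inf [set ereal_sup [set ((ln (Ndelta F delta) / (- ln delta))%:E)
                             | delta in [set d : R | 0 < d < eps]]
            | eps in [set e : R | 0 < e]].

Definition poly2 (n : nat) (a : 'I_n -> 'I_n -> R) (x y : R) : R :=
  \sum_(i < n) \sum_(j < n) a i j * x ^+ i * y ^+ j.

End Defs.

From HB Require Import structures.
From mathcomp Require Import all_boot all_order all_algebra.
From mathcomp Require Import all_classical all_reals all_analysis.
From mathcomp Require Import ring lra zify.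
Import Order.TTheory GRing.Theory Num.Theory numFieldNormedType.Exports.
Local Open Scope classical_set_scope.
Local Open Scope ring_scope.

(* For h = P(f, g) there is L with |h x - h y| <= L (|f x - f y| + |g x - g y|)
   on [0, 1]. Cut [0, 1] into columns of width d/2. Given covers of G(f) and
   G(g) by n1 and n2 sets of diameter d, the intermediate value theorem bounds
   the oscillation of f on a column by d times the number of those sets meeting
   G(f) above it, and each set meets at most 7 columns. Stacking squares of side
   d/2 over each column thus covers G(h) by at most 7 (4L + 1) (n1 + n2) sets, so
   N_d(G(h)) <= C (N_d(G(f)) + N_d(G(g))) with C independent of d, and the
   constant disappears in the limit of log N_d / - log d. *)

Set Implicit Arguments. Unset Strict Implicit.

Section BoxCounting.
Variable R : realType.
Implicit Types (F : set (R * R)) (p q : R * R) (d w : R).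

Lemma dist2_ge_norm1 p q : `|p.1 - q.1| <= dist2 p q.
Proof.
rewrite /dist2 -sqrtr_sqr ler_sqrt; last by rewrite addr_ge0 // sqr_ge0.
by rewrite lerDl sqr_ge0.
Qed.

Lemma dist2_ge_norm2 p q : `|p.2 - q.2| <= dist2 p q.
Proof.
rewrite /dist2 -sqrtr_sqr ler_sqrt; last by rewrite addr_ge0 // sqr_ge0.
by rewrite lerDr sqr_ge0.
Qed.

Lemma dist2_le_square p q w :
  `|p.1 - q.1| <= w -> `|p.2 - q.2| <= w -> dist2 p q <= 2 * w.
Proof.
move=> h1 h2; have w0 : 0 <= w := le_trans (normr_ge0 _) h1.
rewrite /dist2 -(ger0_norm (mulr_ge0 (ler0n _ 2) w0)) -sqrtr_sqr ler_sqrt;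
  last by rewrite sqr_ge0.
move: h1 h2; rewrite !ler_norml => /andP[a1 a2] /andP[b1 b2]; nra.
Qed.

Lemma covers_card F d (T : finType) (U : T -> set (R * R)) :
  (forall t p q, U t p -> U t q -> dist2 p q <= d) ->
  (forall p, F p -> exists t, U t p) -> covers F d #|T|.
Proof.
move=> hd hc; exists (fun i => U (enum_val i)); split; first by move=> i; apply: hd.
by move=> p /hc[t Ut]; exists (enum_rank t); rewrite ?enum_rankK.
Qed.

Lemma Ndelta_le F d n : covers F d n -> Ndelta F d <= n%:R.
Proof.
move=> c; apply: ge_inf; last by exists n.
by exists 0 => _ [k _ <-]; rewrite ler0n.
Qed.

Lemma Ndelta_ge F d x : (exists n, covers F d n) ->
  (forall n, covers F d n -> x <= n%:R) -> x <= Ndelta F d.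
Proof.
move=> [n c] h; apply: lb_le_inf; first by exists n%:R, n.
by move=> _ [k ck <-]; apply: h.
Qed.

Lemma Ndelta_ge1 F d p : F p -> (exists n, covers F d n) -> 1 <= Ndelta F d.
Proof.
move=> Fp ex; apply: Ndelta_ge => // -[|n] [U [_ /(_ p Fp) [[] //]]].
by rewrite ler1n.
Qed.

Lemma Ndelta_le_mul_add F G H d (k : nat) : (0 < k)%N ->
  (exists n, covers G d n) -> (exists n, covers H d n) ->
  (forall n1 n2, covers G d n1 -> covers H d n2 ->
     exists2 N, covers F d N & (N <= k * (n1 + n2))%N) ->
  Ndelta F d <= k%:R * (Ndelta G d + Ndelta H d).
Proof.
move=> k0 exG exH hF; have kR : 0 < k%:R :> R by rewrite ltr0n.
rewrite mulrC -ler_pdivrMr // -lerBlDr.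
apply: Ndelta_ge => // n1 c1; rewrite lerBlDr addrC -lerBlDr.
apply: Ndelta_ge => // n2 c2; rewrite lerBlDr ler_pdivrMr //.
have [N cN hN] := hF _ _ c1 c2.
by apply: le_trans (Ndelta_le cN) _; rewrite -natrD -natrM ler_nat mulnC addnC.
Qed.

Definition in_column w (j : nat) (x : R) :=
  0 <= x <= 1 /\ j%:R * w <= x <= j.+1%:R * w.

Lemma truncn_div_itv (x w : R) : 0 < w -> 0 <= x ->
  (Num.truncn (x / w))%:R * w <= x < (Num.truncn (x / w)).+1%:R * w.
Proof.
move=> w0 x0; have /andP[a b] := truncn_itv (divr_ge0 x0 (ltW w0)).
by rewrite -ler_pdivlMr // -ltr_pdivrMr // a b.
Qed.

Lemma truncn_div_lt (x w : R) (n : nat) : 0 < w -> 0 <= x -> x < n%:R * w ->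
  (Num.truncn (x / w) < n)%N.
Proof.
by move=> w0 x0 h; rewrite truncn_lt_nat ?ltr_pdivrMr // divr_ge0 // ltW.
Qed.

Lemma covers_graph_grid (h : R -> R) w (m : nat) (rows : 'I_m -> nat)
    (base : 'I_m -> R) :
  0 < w -> 1 < m%:R * w ->
  (forall (j : 'I_m) x, in_column w j x -> base j <= h x < base j + (rows j)%:R * w) ->
  covers (graph h) (2 * w) (\sum_(j < m) rows j).
Proof.
move=> w0 mw hrow; pose T := {j : 'I_m & 'I_(rows j)}.
pose cell (t : T) : set (R * R) := [set p |
  (tag t)%:R * w <= p.1 <= (tag t).+1%:R * w /\
  base (tag t) + (tagged t)%:R * w <= p.2 <= base (tag t) + (tagged t).+1%:R * w].
have -> : (\sum_(j < m) rows j)%N = #|{: T}|.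
  by rewrite card_tagged sumnE big_map big_enum; apply: eq_bigr => j _; rewrite card_ord.
apply: (@covers_card _ _ _ cell).
  move=> t p q [/andP[a1 a2] /andP[b1 b2]] [/andP[c1 c2] /andP[e1 e2]].
  apply: dist2_le_square; rewrite ler_norml;
    move: a2 b2 c2 e2; rewrite -!natr1 !mulrDl !mul1r => *; apply/andP; split; lra.
move=> _ [x [/andP[x0 x1] ->]].
have [j1 j2] := andP (truncn_div_itv w0 x0).
have jm : (Num.truncn (x / w) < m)%N by apply: truncn_div_lt => //; lra.
pose j := Ordinal jm.
have [b1 b2] := andP (hrow j x (conj (introT andP (conj x0 x1))
                                    (introT andP (conj j1 (ltW j2))))).
have y0 : 0 <= h x - base j by lra.
have [k1 k2] := andP (truncn_div_itv w0 y0).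
have km : (Num.truncn ((h x - base j) / w) < rows j)%N.
  by apply: truncn_div_lt => //; lra.
exists (Tagged (fun j => 'I_(rows j)) (Ordinal km)).
by split; apply/andP; split => //=; lra.
Qed.

Lemma covers_graph_bounded (h : R -> R) (B d : R) : 0 < d ->
  (forall x, 0 <= x <= 1 -> `|h x| <= B) -> exists n, covers (graph h) d n.
Proof.
move=> d0 hB; pose w := d / 2; have w0 : 0 < w by rewrite divr_gt0.
have -> : d = 2 * w by rewrite /w mulrC divfK ?pnatr_eq0.
pose m := (Num.truncn (1 / w)).+1; pose k := (Num.truncn ((2 * B + 2) / w)).+1.
have hm : 1 < m%:R * w by rewrite -ltr_pdivrMr //; exact: truncnS_gt.
have hk : 2 * B + 2 < k%:R * w by rewrite -ltr_pdivrMr //; exact: truncnS_gt.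
exists (\sum_(j < m) k)%N; apply: covers_graph_grid (fun=> - B - 1) w0 hm _.
move=> j x [hx _]; have := hB x hx; rewrite ler_norml => /andP[b1 b2].
by apply/andP; split; lra.
Qed.

Lemma Ndelta_graph_gt0 (h : R -> R) (B d : R) : 0 < d ->
  (forall x, 0 <= x <= 1 -> `|h x| <= B) -> 0 < Ndelta (graph h) d.
Proof.
move=> d0 hB; apply: lt_le_trans ltr01 (@Ndelta_ge1 _ _ (0, h 0) _ _).
  by exists 0; rewrite lexx ler01.
exact: covers_graph_bounded hB.
Qed.

Definition column_meet (f : R -> R) n (U : 'I_n -> set (R * R)) w (j : nat) :
  {set 'I_n} := [set i | `[< exists x, in_column w j x /\ U i (x, f x) >]].

Lemma column_meet_gt0 (f : R -> R) n (U : 'I_n -> set (R * R)) w j x :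
  graph f `<=` \bigcup_i U i -> in_column w j x -> (0 < #|column_meet f U w j|)%N.
Proof.
move=> hc hx; have [i _ Ui] : (\bigcup_i U i) (x, f x).
  by apply: hc; exists x; split => //; case: hx.
by apply/card_gt0P; exists i; rewrite inE; apply/asboolP; exists x.
Qed.

Lemma between_min_max (a b t : R) : 0 <= t <= 1 ->
  Num.min a b <= a + t * (b - a) <= Num.max a b.
Proof.
move=> /andP[t0 t1]; rewrite /Num.min /Num.max.
by case: ltP => ab; apply/andP; split; nra.
Qed.

Lemma nat_dist_ge1 (r s : nat) : r != s -> 1 <= `|r%:R - s%:R : R|.
Proof.
have gap m k : (m < k)%N -> 1 <= k%:R - m%:R :> R.
  by move=> mk; rewrite lerBrDr addrC natr1 ler_nat.
rewrite ler_normr opprB; case: (ltngtP r s) => [rs|sr|->]; rewrite ?eqxx //= => _.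
  by rewrite (gap r s rs) orbT.
by rewrite (gap s r sr).
Qed.

(* If [f] rises by more than [a * d] on [[x, y]], the intermediate value theorem
   yields [a + 1] points of the graph whose heights are pairwise more than [d]
   apart, so no two of them lie in a common set of diameter [d]. *)
Lemma rise_meets_distinct_sets (f : R -> R) n (U : 'I_n -> set (R * R)) d x y
    (a : nat) :
  x <= y -> {within `[x, y], continuous f} ->
  (forall i p q, U i p -> U i q -> dist2 p q <= d) ->
  (forall c, x <= c <= y -> exists i, U i (c, f c)) ->
  (0 < a)%N -> a%:R * d < `|f y - f x| ->
  exists2 s : 'I_a.+1 -> 'I_n, injective s &
    forall r, exists2 c, x <= c <= y & U (s r) (c, f c).
Proof.
move=> xy fcont hd hU a0 hD; have aR : 0 < a%:R :> R by rewrite ltr0n.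
pose v (r : nat) := f x + r%:R / a%:R * (f y - f x).
have level (r : 'I_a.+1) :
    exists i, exists2 c, x <= c <= y & f c = v r /\ U i (c, f c).
  have r1 : 0 <= (r%:R / a%:R : R) <= 1.
    by rewrite divr_ge0 //= ler_pdivrMr // mul1r ler_nat -ltnS.
  have [c] := IVT xy fcont (@between_min_max (f x) (f y) _ r1).
  rewrite in_itv /= => cxy fcv; have [i Ui] := hU c cxy.
  by exists i; exists c.
have [s hs] := choice level; exists s => [r r' srr'|r]; last first.
  by have [c ? [_ ?]] := hs r; exists c.
apply/eqP; apply: contraT => rr'.
have [c cxy [fc Uc]] := hs r; have [c' c'xy [fc' Uc']] := hs r'.
rewrite srr' in Uc; suff : d < dist2 (c, f c) (c', f c').
  by rewrite ltNge (hd _ _ _ Uc Uc').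
apply: lt_le_trans (dist2_ge_norm2 _ _); rewrite /= fc fc' /v.
have -> : f x + r%:R / a%:R * (f y - f x) - (f x + r'%:R / a%:R * (f y - f x)) =
    (r%:R - r'%:R) * ((f y - f x) / a%:R) by field; rewrite gt_eqF.
have spacing : d < `|(f y - f x) / a%:R|.
  by rewrite normrM normfV (gtr0_norm aR) ltr_pdivlMr // mulrC.
by rewrite normrM (lt_le_trans spacing) // ler_peMl ?nat_dist_ge1.
Qed.

Lemma osc_column_le (f : R -> R) n (U : 'I_n -> set (R * R)) d w (j : nat) x y :
  {within `[(0:R), 1]%classic, continuous f} ->
  (forall i p q, U i p -> U i q -> dist2 p q <= d) ->
  graph f `<=` \bigcup_i U i ->
  in_column w j x -> in_column w j y ->
  `|f x - f y| <= #|column_meet f U w j|%:R * d.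
Proof.
move=> fcont hd hc; wlog xy : x y / x <= y.
  move=> hw hx hy; case: (lerP x y) => [|/ltW] xy; first exact: hw.
  by rewrite distrC; apply: hw.
move=> [/andP[x0 _] /andP[jx _]] [/andP[_ y1] /andP[_ yj]].
set a := #|column_meet f U w j|.
have a0 : (0 < a)%N.
  by apply: (@column_meet_gt0 _ _ _ _ _ x) => //; split; apply/andP; split; lra.
have in_col c : x <= c <= y -> in_column w j c.
  by move=> /andP[xc cy]; split; apply/andP; split; lra.
rewrite leNgt distrC; apply/negP => hD.
have fxy : {within `[x, y], continuous f}.
  apply: continuous_subspaceW fcont => z /=; rewrite !in_itv /= => /andP[xz zy].
  by apply/andP; split; lra.
have cover c : x <= c <= y -> exists i, U i (c, f c).
  move=> cxy; have [i _ Ui] : (\bigcup_i U i) (c, f c).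
    by apply: hc; exists c; split => //; case: (in_col c cxy).
  by exists i.
have [s s_inj hs] := rise_meets_distinct_sets xy fxy hd cover a0 hD.
have : (s @: [set: 'I_a.+1] \subset column_meet f U w j)%SET.
  apply/fintype.subsetP => _ /imsetP[r _ ->]; rewrite inE; apply/asboolP.
  by have [c cxy Uc] := hs r; exists c; split => //; apply: in_col.
by move/subset_leq_card; rewrite card_imset // cardsT card_ord ltnn.
Qed.

Lemma card_le_window m (P : pred 'I_m) (c k : nat) :
  (forall j, P j -> c <= j < c + k)%N -> (#|P| <= k)%N.
Proof.
move=> hP; rewrite cardE -(size_map val) -[k in (_ <= k)%N](size_iota c).
apply: uniq_leq_size; first by rewrite map_inj_uniq ?enum_uniq //; exact: val_inj.
by move=> _ /mapP[j Pj ->]; rewrite mem_iota hP //; rewrite mem_enum in Pj.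
Qed.

Lemma column_index_le w (j k : nat) x y : 0 < w ->
  in_column w j x -> in_column w k y -> `|x - y| <= 2 * w -> (j <= k + 3)%N.
Proof.
move=> w0 [_ /andP[jx _]] [_ /andP[_ yk]]; rewrite ler_norml => /andP[_ xy].
rewrite -(ler_nat R) -(ler_pM2r w0) natrD mulrDl.
by move: yk; rewrite -natr1 mulrDl mul1r => yk; lra.
Qed.

(* Double counting: a set of diameter [2 * w] meets at most 7 consecutive
   columns of width [w]. *)
Lemma column_meet_sum (f : R -> R) n (U : 'I_n -> set (R * R)) w (m : nat) :
  0 < w -> (forall i p q, U i p -> U i q -> dist2 p q <= 2 * w) ->
  (\sum_(j < m) #|column_meet f U w j| <= 7 * n)%N.
Proof.
move=> w0 hd.
have -> : (\sum_(j < m) #|column_meet f U w j| =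
    \sum_(i < n) #|[pred j : 'I_m | i \in column_meet f U w j]|)%N.
  transitivity (\sum_(j < m) \sum_(i < n) (i \in column_meet f U w j : nat))%N.
    apply: eq_bigr => j _; rewrite -sum1_card big_mkcond /=.
    by apply: eq_bigr => i _; case: (i \in _).
  rewrite exchange_big /=; apply: eq_bigr => i _.
  rewrite -sum1_card [RHS]big_mkcond /=.
  by apply: eq_bigr => j _; rewrite !inE; case: (i \in column_meet f U w j).
apply: (@leq_trans (\sum_(i < n) 7)%N); last by rewrite sum_nat_const card_ord mulnC.
apply: leq_sum => i _.
case: (pickP [pred j : 'I_m | i \in column_meet f U w j]) => [j0 hj0|]; last first.
  by move=> h; rewrite (eq_card0 h).
apply: (@card_le_window _ _ (j0 - 3)) => j hj.
move: hj0 hj; rewrite /= !inE => -[x0 [hx0 U0]] [x [hx U1]].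
have dx := le_trans (dist2_ge_norm1 _ _) (hd _ _ _ U0 U1); rewrite distrC in dx.
have := column_index_le w0 hx hx0 dx; rewrite distrC in dx.
have := column_index_le w0 hx0 hx dx; lia.
Qed.

Lemma in_column_left w (j : nat) x : 0 < w ->
  in_column w j x -> in_column w j (j%:R * w).
Proof.
move=> w0 [/andP[_ x1] /andP[jx _]].
have jw0 : 0 <= j%:R * w by rewrite mulr_ge0 // ltW.
by split; apply/andP; split => //; [lra | rewrite ler_pM2r // ler_nat].
Qed.

Lemma osc_column_lipschitz (f g h : R -> R) (L d w : R) n1 n2
    (U : 'I_n1 -> set (R * R)) (V : 'I_n2 -> set (R * R)) (j : nat) x y :
  {within `[(0:R), 1]%classic, continuous f} ->
  {within `[(0:R), 1]%classic, continuous g} -> 0 <= L ->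
  (forall x y, 0 <= x <= 1 -> 0 <= y <= 1 ->
     `|h x - h y| <= L * (`|f x - f y| + `|g x - g y|)) ->
  (forall i p q, U i p -> U i q -> dist2 p q <= d) -> graph f `<=` \bigcup_i U i ->
  (forall i p q, V i p -> V i q -> dist2 p q <= d) -> graph g `<=` \bigcup_i V i ->
  in_column w j x -> in_column w j y ->
  `|h x - h y| <=
    L * (#|column_meet f U w j| + #|column_meet g V w j|)%:R * d.
Proof.
move=> fc gc L0 hL hdU hcU hdV hcV hx hy.
apply: le_trans (hL x y hx.1 hy.1) _; rewrite -mulrA ler_wpM2l // natrD mulrDl.
by rewrite lerD // osc_column_le.
Qed.

Lemma covers_graph_lipschitz (f g h : R -> R) (L w : R) n1 n2 :
  {within `[(0:R), 1]%classic, continuous f} ->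
  {within `[(0:R), 1]%classic, continuous g} -> 0 < w -> 0 <= L ->
  (forall x y, 0 <= x <= 1 -> 0 <= y <= 1 ->
     `|h x - h y| <= L * (`|f x - f y| + `|g x - g y|)) ->
  covers (graph f) (2 * w) n1 -> covers (graph g) (2 * w) n2 ->
  exists2 N, covers (graph h) (2 * w) N &
    (N <= (Num.truncn (4 * L)).+1 * 7 * (n1 + n2))%N.
Proof.
move=> fc gc w0 L0 hL [U [hdU hcU]] [V [hdV hcV]].
set K := (Num.truncn (4 * L)).+1; have hK : 4 * L < K%:R by apply: truncnS_gt.
pose m := (Num.truncn (1 / w)).+1.
have hm : 1 < m%:R * w by rewrite -ltr_pdivrMr //; exact: truncnS_gt.
pose S (j : nat) := (#|column_meet f U w j| + #|column_meet g V w j|)%N.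
exists (\sum_(j < m) K * S j)%N.
  apply: (covers_graph_grid (base := fun j => h (j%:R * w) - 2 * L * (S j)%:R * w)
    w0 hm) => j x hx.
  have S0 : 0 < (S j)%:R :> R.
    by rewrite ltr0n ltn_addr // (column_meet_gt0 hcU hx).
  have := osc_column_lipschitz fc gc L0 hL hdU hcU hdV hcV hx (in_column_left w0 hx).
  have key : 4 * L * ((S j)%:R * w) < K%:R * ((S j)%:R * w).
    by rewrite ltr_pM2r ?mulr_gt0.
  rewrite ler_norml natrM -/(S j); move=> /andP[h1 h2]; apply/andP; split; nra.
rewrite -big_distrr /= -mulnA leq_mul2l; apply/orP; right.
by rewrite big_split mulnDr leq_add // column_meet_sum.
Qed.

Section Controlled.
Variable D : set R.

Definition controlled (f g h : R -> R) := exists B L : R, [/\ 0 <= B, 0 <= L,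
  forall x, D x -> `|h x| <= B &
  forall x y, D x -> D y -> `|h x - h y| <= L * (`|f x - f y| + `|g x - g y|)].

Variables (f g : R -> R).

Lemma controlled_cst (c : R) : controlled f g (fun=> c).
Proof. by exists `|c|, 0; split => // x y _ _; rewrite subrr normr0 mul0r. Qed.

Lemma controlled_l (B : R) : (forall x, D x -> `|f x| <= B) -> controlled f g f.
Proof.
move=> hB; exists `|B|, 1; split => // [x Dx|x y _ _].
  exact: le_trans (hB x Dx) (ler_norm B).
by rewrite mul1r lerDl.
Qed.

Lemma controlled_r (B : R) : (forall x, D x -> `|g x| <= B) -> controlled f g g.
Proof.
move=> hB; exists `|B|, 1; split => // [x Dx|x y _ _].
  exact: le_trans (hB x Dx) (ler_norm B).
by rewrite mul1r lerDr.
Qed.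

Lemma controlledD h1 h2 : controlled f g h1 -> controlled f g h2 ->
  controlled f g (fun x => h1 x + h2 x).
Proof.
move=> [B1 [L1 [B10 L10 hB1 hL1]]] [B2 [L2 [B20 L20 hB2 hL2]]].
exists (B1 + B2), (L1 + L2).
split=> [||x Dx|x y Dx Dy]; rewrite ?addr_ge0 //.
  by apply: le_trans (ler_normD _ _) _; rewrite lerD ?hB1 ?hB2.
have -> : h1 x + h2 x - (h1 y + h2 y) = (h1 x - h1 y) + (h2 x - h2 y) by ring.
by apply: le_trans (ler_normD _ _) _; rewrite mulrDl lerD ?hL1 ?hL2.
Qed.

Lemma controlledM h1 h2 : controlled f g h1 -> controlled f g h2 ->
  controlled f g (fun x => h1 x * h2 x).
Proof.
move=> [B1 [L1 [B10 L10 hB1 hL1]]] [B2 [L2 [B20 L20 hB2 hL2]]].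
exists (B1 * B2), (B1 * L2 + B2 * L1).
split=> [||x Dx|x y Dx Dy]; rewrite ?mulr_ge0 ?addr_ge0 ?mulr_ge0 //.
  by rewrite normrM ler_pM ?hB1 ?hB2.
have -> : h1 x * h2 x - h1 y * h2 y =
  h1 x * (h2 x - h2 y) + (h1 x - h1 y) * h2 y by ring.
apply: le_trans (ler_normD _ _) _; rewrite !normrM.
have e1 := ler_pM (normr_ge0 _) (normr_ge0 _) (hB1 x Dx) (hL2 x y Dx Dy).
have e2 := ler_pM (normr_ge0 _) (normr_ge0 _) (hL1 x y Dx Dy) (hB2 y Dy).
set s := `|f x - f y| + `|g x - g y|.
have -> : (B1 * L2 + B2 * L1) * s = B1 * (L2 * s) + L1 * s * B2 by ring.
exact: lerD e1 e2.
Qed.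

Lemma controlledX h (k : nat) : controlled f g h -> controlled f g (fun x => h x ^+ k).
Proof.
move=> hh; elim: k => [|k IH]; first exact: controlled_cst.
by under [fun x => _]funext do rewrite exprS; exact: controlledM.
Qed.

Lemma controlled_sum (I : Type) (r : seq I) (F : I -> R -> R) :
  (forall i, controlled f g (F i)) -> controlled f g (fun x => \sum_(i <- r) F i x).
Proof.
move=> hF; elim: r => [|i r IH].
  by under [fun x => _]funext do rewrite big_nil; exact: controlled_cst.
by under [fun x => _]funext do rewrite big_cons; exact: controlledD.
Qed.

Lemma controlled_poly2 (Bf Bg : R) n (a : 'I_n -> 'I_n -> R) :
  (forall x, D x -> `|f x| <= Bf) -> (forall x, D x -> `|g x| <= Bg) ->
  controlled f g (fun x => poly2 a (f x) (g x)).
Proof.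
move=> hf hg; apply: controlled_sum => i; apply: controlled_sum => j.
apply: controlledM; last exact: controlledX (controlled_r hg).
by apply: controlledM; [exact: controlled_cst | exact: controlledX (controlled_l hf)].
Qed.

End Controlled.

Lemma bounded_continuous01 (f : R -> R) : {within `[(0:R), 1]%classic, continuous f} ->
  exists B, forall x, 0 <= x <= 1 -> `|f x| <= B.
Proof.
move=> fc; have [c1 _ hmax] := EVT_max (@ler01 R) fc.
have [c2 _ hmin] := EVT_min (@ler01 R) fc.
exists (`|f c1| + `|f c2|) => x x01; have x01' : x \in `[(0:R), 1] by rewrite in_itv.
have := hmax _ x01'; have := hmin _ x01'.
have := ler_norm (f c1); have := ler_norm (- f c2); rewrite normrN.
have := normr_ge0 (f c1); have := normr_ge0 (f c2).
by rewrite ler_norml => *; apply/andP; split; lra.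
Qed.

Lemma ubox_dim_lt F (r : R) : (ubox_dim F < r%:E)%E ->
  exists2 eps, 0 < eps & forall d, 0 < d < eps -> ln (Ndelta F d) / - ln d < r.
Proof.
move=> /ereal_inf_lt[_ [eps eps0 <-] hsup]; exists eps => // d hd.
by rewrite -lte_fin; apply: le_lt_trans hsup; apply: ereal_sup_ubound; exists d.
Qed.

Lemma ubox_dim_le F (M : \bar R) :
  (forall r e, (M < r%:E)%E -> 0 < e -> exists2 eps, 0 < eps &
     forall d, 0 < d < eps -> ln (Ndelta F d) / - ln d <= r + e) ->
  (ubox_dim F <= M)%E.
Proof.
move=> hM; have le_r r e : (M < r%:E)%E -> 0 < e -> (ubox_dim F <= (r + e)%:E)%E.
  move=> Mr e0; have [eps eps0 h] := hM r e Mr e0.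
  apply: le_trans (ereal_inf_lbound _) _; first by exists eps.
  by apply: ge_ereal_sup => _ [d hd <-]; rewrite lee_fin h.
case: M {hM} le_r => [m| |] le_r; [|by rewrite leey|].
  apply/lee_addgt0Pr => e e0; have e20 : 0 < e / 2 by rewrite divr_gt0.
  have := le_r (m + e / 2) (e / 2); rewrite lte_fin ltrDl -addrA -splitr.
  by apply.
rewrite (@eq_ninfty _ (ubox_dim F)) // => r.
by have := le_r (r - 1) 1; rewrite subrK; apply; rewrite ?ltNyr.
Qed.

Lemma div_neg_ln_lt (c e d : R) : 0 < e -> 0 < d < 1 -> d < expR (- c / e) ->
  c / - ln d < e.
Proof.
move=> e0 d01 dc; have ld : 0 < - ln d by rewrite oppr_gt0 ln_lt0.
have : ln d < - c / e.
  by rewrite -(expRK (- c / e)) ltr_ln ?posrE ?expR_gt0 //; case/andP: d01.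
by rewrite ltr_pdivlMr // ltr_pdivrMr // => ?; nra.
Qed.

Lemma ln_ratio_le_max (NF NG NH C d : R) : 0 < d < 1 -> 0 < C ->
  0 < NF -> 0 < NG -> 0 < NH -> NF <= C * (NG + NH) ->
  ln NF / - ln d <= ln (2 * C) / - ln d + Num.max (ln NG / - ln d) (ln NH / - ln d).
Proof.
move=> d01 C0 NF0 NG0 NH0 hF.
have ld : 0 < (- ln d)^-1 by rewrite invr_gt0 oppr_gt0 ln_lt0.
rewrite -maxr_pMl ?(ltW ld) // -mulrDl ler_pM2r //.
wlog NGH : NG NH NG0 NH0 hF / NG <= NH.
  move=> hw; case: (lerP NG NH) => [|/ltW] hGH; first exact: hw.
  by rewrite maxC; apply: hw; rewrite // addrC.
have C2 : 0 < 2 * C by rewrite mulr_gt0.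
rewrite max_r ?ler_ln ?posrE // -lnM ?posrE // ler_ln ?posrE ?mulr_gt0 //.
by apply: le_trans hF _; nra.
Qed.

Lemma ubox_dim_le_maxe F G H (C : R) : 0 < C ->
  (forall d, 0 < d < 1 -> [/\ 0 < Ndelta F d, 0 < Ndelta G d, 0 < Ndelta H d &
     Ndelta F d <= C * (Ndelta G d + Ndelta H d)]) ->
  (ubox_dim F <= maxe (ubox_dim G) (ubox_dim H))%E.
Proof.
move=> C0 hN; apply: ubox_dim_le => r e; rewrite gt_max => /andP[hG hH] e0.
have [eG eG0 ltG] := ubox_dim_lt hG; have [eH eH0 ltH] := ubox_dim_lt hH.
exists (Num.min (Num.min eG eH) (Num.min 1 (expR (- ln (2 * C) / e)))).
  by rewrite !lt_min eG0 eH0 ltr01 expR_gt0.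
move=> d /andP[d0]; rewrite !lt_min => /andP[/andP[dG dH] /andP[d1 dC]].
have d01 : 0 < d < 1 by rewrite d0 d1.
have [NF NG NH hF] := hN d d01.
apply: le_trans (ln_ratio_le_max d01 C0 NF NG NH hF) _.
rewrite addrC lerD ?ltW ?(div_neg_ln_lt e0 d01 dC) //.
by rewrite gt_max ltG ?ltH ?d0.
Qed.

End BoxCounting.

Unset Implicit Arguments. Set Strict Implicit.

Theorem theorem3p7 (R : realType) (f g : R -> R)
  (hf : {within `[(0:R), 1]%classic, continuous f})
  (hg : {within `[(0:R), 1]%classic, continuous g})
  (n : nat) (a : 'I_n -> 'I_n -> R) :
  (ubox_dim (graph (fun x => poly2 a (f x) (g x)))
     <= maxe (ubox_dim (graph f)) (ubox_dim (graph g)))%E.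
Proof.
have [Bf hBf] := bounded_continuous01 hf; have [Bg hBg] := bounded_continuous01 hg.
have [B [L [_ L0 hB hL]]] := controlled_poly2 (D := [set x | 0 <= x <= 1]) a hBf hBg.
apply: (@ubox_dim_le_maxe _ _ _ _ ((Num.truncn (4 * L)).+1 * 7)%:R) => [|d /andP[d0 _]].
  by rewrite ltr0n.
have w0 : 0 < d / 2 by rewrite divr_gt0.
have -> : d = 2 * (d / 2) by rewrite mulrC divfK ?pnatr_eq0.
have d0' : 0 < 2 * (d / 2) by rewrite mulr_gt0.
split; [exact: Ndelta_graph_gt0 d0' hB | exact: Ndelta_graph_gt0 d0' hBf |
        exact: Ndelta_graph_gt0 d0' hBg |].
apply: (@Ndelta_le_mul_add R _ _ _ _ ((Num.truncn (4 * L)).+1 * 7)) => //.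
- exact: covers_graph_bounded d0' hBf.
- exact: covers_graph_bounded d0' hBg.
- by move=> n1 n2; apply: covers_graph_lipschitz.
Qed.
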